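(* Let $h_1,h_2$ be flow graphs over a flow monoid with $h_1.X=h_2.X$ and $h_1.\mathit{in}=h_2.\mathit{in}$. If $Z\in\mathrm{FP}(h_1,h_2)$ and $Z\subseteq Y\subseteq h_1.X$, then $Y\in\mathrm{FP}(h_1,h_2)$.
   Context: A flow monoid is a commutative monoid $(\mathbb{M},+,0)$ such that $n\le m :\iff \exists o.\ m=n+o$ is a partial order in which every ascending chain $K$ has a least upper bound $\bigsqcup K$, and $n+\bigsqcup K=\bigsqcup(n+K)$. $\mathcal{C}(\mathbb{M}\to\mathbb{M})$ is the set of functions commuting with least upper bounds of ascending chains. Infinite sums denote least upper bounds of finite partial sums. A flow graph is $h=(X,E,\mathit{in})$ with $X\subseteq\mathbb{N}$ finite, $E:X\times\mathbb{N}\to\mathcal{C}(\mathbb{M}\to\mathbb{M})$, $\mathit{in}:(\mathbb{N}\setminus X)\times X\to\mathbb{M}$; $\mathit{in}_x=\sum_{y\in\mathbb{N}\setminus X}\mathit{in}(y,x)$; the flow $h.\mathit{flow}$ is the least $\mathit{flow}:X\to\mathbb{M}$ with $\mathit{flow}(x)=\mathit{in}_x+\sum_{y\in X}E(y,x)(\mathit{flow}(y))$; the outflow is $h.\mathit{out}(x,y)=E(x,y)(h.\mathit{flow}(x))$ for $x\in X$, $y\notin X$. Transfer function: $\mathsf{tf}(h)(\mathit{in}')$ is the outflow of $(X,E,\mathit{in}')$. $\mathsf{tf}(h_1)=_{\mathit{in}}\mathsf{tf}(h_2)$ means equality on all inflows $\mathit{in}'\le\mathit{in}$ (pointwise). Contextual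 equivalence $h_1\approx h_2$: $h_1.X=h_2.X$, $h_1.\mathit{in}=h_2.\mathit{in}$, $\mathsf{tf}(h_1)=_{h_1.\mathit{in}}\mathsf{tf}(h_2)$. Restriction: for $Y\subseteq\mathbb{N}$, $h|_Y=(X\cap Y,\ E|_{(X\cap Y)\times\mathbb{N}},\ \mathit{in}')$ with $\mathit{in}'(z,y)=\mathit{in}(z,y)$ for $z\notin X$, $y\in X\cap Y$, and $\mathit{in}'(x,y)=E(x,y)(h.\mathit{flow}(x))$ for $x\in X\setminus Y$, $y\in X\cap Y$. Footprints: for $h_1,h_2$ with $X=h_1.X=h_2.X$ and $h_1.\mathit{in}=h_2.\mathit{in}$, $\mathrm{FP}(h_1,h_2)$ is the set of $Y\subseteq X$ such that $h_1|_Y\approx h_2|_Y$ and $h_1|_{X\setminus Y}=h_2|_{X\setminus Y}$. *)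

From HB Require Import structures.
From mathcomp Require Import all_boot all_order all_algebra.
From mathcomp Require Import finmap.
From Stdlib Require Import ClassicalEpsilon.
Set Implicit Arguments. Unset Strict Implicit. Unset Printing Implicit Defensive.
Import GRing.Theory.
Local Open Scope ring_scope.


Section FlowDefs.
Variable M : nmodType.

Definition fm_le (n m : M) : Prop := exists o : M, m = n + o.

Definition ascending (K : nat -> M) : Prop := forall i, fm_le (K i) (K i.+1).

Definition is_lub (K : nat -> M) (l : M) : Prop :=
  (forall i, fm_le (K i) l) /\ (forall u, (forall i, fm_le (K i) u) -> fm_le l u).

(* the least upper bound (chosen; unique in a flow monoid by antisymmetry) *)
Definition sup (K : nat -> M) : M :=
  epsilon (inhabits (0 : M)) (fun l => is_lub K l).

Definition flow_monoid : Prop :=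
  [/\ (forall n m : M, fm_le n m -> fm_le m n -> n = m),
      (forall K, ascending K -> exists l, is_lub K l) &
      (forall (n : M) K l, ascending K -> is_lub K l ->
          is_lub (fun i => n + K i) (n + l))].

Definition chain_continuous (f : M -> M) : Prop :=
  forall K l, ascending K -> is_lub K l -> is_lub (fun i => f (K i)) (f l).

(* Flow graphs h = (X, E, in).  E and in are total functions; only their
   values on X x N resp. (N \ X) x X are meaningful. *)
Record flow_graph := FlowGraph {
  fg_X : {fset nat};
  fg_E : nat -> nat -> M -> M;
  fg_in : nat -> nat -> M }.

Definition is_flow_graph (h : flow_graph) : Prop :=
  forall x y, x \in fg_X h -> chain_continuous (fg_E h x y).

(* in_x = sum_{y in N \ X} in(y, x), as lub of the finite partial sums *)
Definition inflow (h : flow_graph) (x : nat) : M :=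
  sup (fun n => \sum_(y < n | (y : nat) \notin fg_X h) fg_in h y x).

Definition is_flow_solution (h : flow_graph) (f : nat -> M) : Prop :=
  forall x, x \in fg_X h ->
    f x = inflow h x + \sum_(y <- fg_X h) fg_E h y x (f y).

Definition is_least_flow (h : flow_graph) (f : nat -> M) : Prop :=
  is_flow_solution h f /\
  forall g, is_flow_solution h g -> forall x, x \in fg_X h -> fm_le (f x) (g x).

(* h.flow (only its values on h.X are meaningful) *)
Definition flow (h : flow_graph) : nat -> M :=
  epsilon (inhabits (fun _ : nat => (0 : M))) (fun f => is_least_flow h f).

Definition outflow (h : flow_graph) (x y : nat) : M := fg_E h x y (flow h x).

Definition tf (h : flow_graph) (inp : nat -> nat -> M) : nat -> nat -> M :=
  outflow (FlowGraph (fg_X h) (fg_E h) inp).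

Definition same_in (h1 h2 : flow_graph) : Prop :=
  forall z y, z \notin fg_X h1 -> y \in fg_X h1 -> fg_in h1 z y = fg_in h2 z y.

Definition tf_eq_on (X : {fset nat}) (inp : nat -> nat -> M)
    (h1 h2 : flow_graph) : Prop :=
  forall inp' : nat -> nat -> M,
    (forall z y, z \notin X -> y \in X -> fm_le (inp' z y) (inp z y)) ->
    forall x y, x \in X -> y \notin X -> tf h1 inp' x y = tf h2 inp' x y.

Definition ctx_equiv (h1 h2 : flow_graph) : Prop :=
  [/\ fg_X h1 = fg_X h2, same_in h1 h2 & tf_eq_on (fg_X h1) (fg_in h1) h1 h2].

(* equality of flow graphs (as functions on their domains) *)
Definition graph_eq (h1 h2 : flow_graph) : Prop :=
  [/\ fg_X h1 = fg_X h2,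
      (forall x y m, x \in fg_X h1 -> fg_E h1 x y m = fg_E h2 x y m) &
      same_in h1 h2].

Definition restrict (h : flow_graph) (Y : {fset nat}) : flow_graph :=
  FlowGraph (fg_X h `&` Y)%fset (fg_E h)
    (fun z y => if z \in fg_X h then fg_E h z y (flow h z) else fg_in h z y).

Definition FP (h1 h2 : flow_graph) (Y : {fset nat}) : Prop :=
  [/\ (Y `<=` fg_X h1)%fset,
      ctx_equiv (restrict h1 Y) (restrict h2 Y) &
      graph_eq (restrict h1 (fg_X h1 `\` Y)%fset) (restrict h2 (fg_X h1 `\` Y)%fset)].

End FlowDefs.

From mathcomp Require Import all_boot all_order all_algebra.
From mathcomp Require Import finmap.
From Stdlib Require Import ClassicalEpsilon FunctionalExtensionality PropExtensionality.
Set Implicit Arguments. Unset Strict Implicit. Unset Printing Implicit Defensive.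
Import GRing.Theory.
Local Open Scope fset_scope.
Local Open Scope ring_scope.

(* Outside Z the two graphs
   have the same edges, hence (restricting to X \ Z) the same flow; this gives
   at once that the restrictions to Y have the same inflow and that the
   restrictions to X \ Y coincide.  The heart of the proof is the transfer
   equivalence of h1|_Y and h2|_Y.  Given an inflow below the one of h1|_Y,
   run both graphs on W = X /\ Y; their restrictions to S = X /\ Z receive an
   inflow below that of h1|_Z, so by the footprint property they send the
   same outflow out of S.  A "splicing" argument (glue the flow of one graph
   on S to the flow of the other outside S; it is a prefixpoint) then bounds
   each flow outside S by the other, so the flows, and thus the outflows, agree. *)

Section FlowMonoidOrder.
Variable M : nmodType.
Hypothesis HM : flow_monoid M.

Lemma fm_le_refl (a : M) : fm_le a a.
Proof. by exists 0; rewrite addr0. Qed.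

Lemma fm_le_eq (a b : M) : a = b -> fm_le a b.
Proof. by move=> ->; apply: fm_le_refl. Qed.

Lemma fm_le_trans (a b c : M) : fm_le a b -> fm_le b c -> fm_le a c.
Proof. by move=> [o ->] [p ->]; exists (o + p); rewrite addrA. Qed.

Lemma fm_le_antisym (a b : M) : fm_le a b -> fm_le b a -> a = b.
Proof. by case: HM => antisym _ _; apply: antisym. Qed.

Lemma fm_le0 (a : M) : fm_le 0 a.
Proof. by exists a; rewrite add0r. Qed.

Lemma fm_le_add (a b c d : M) : fm_le a b -> fm_le c d -> fm_le (a + c) (b + d).
Proof. by move=> [o ->] [p ->]; exists (o + p); rewrite addrACA. Qed.

Lemma fm_le_sum (I : eqType) (s : seq I) (P : pred I) (F G : I -> M) :
  (forall y, y \in s -> P y -> fm_le (F y) (G y)) ->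
  fm_le (\sum_(y <- s | P y) F y) (\sum_(y <- s | P y) G y).
Proof.
elim: s => [|a s IH] FG; first by rewrite !big_nil; apply: fm_le_refl.
rewrite !big_cons; case: ifP => Pa; last by apply: IH => y ys; apply: FG; rewrite inE ys orbT.
apply: fm_le_add; first exact: FG (mem_head _ _) Pa.
by apply: IH => y ys; apply: FG; rewrite inE ys orbT.
Qed.

Lemma ascending_mono (K : nat -> M) :
  ascending K -> forall i j, (i <= j)%N -> fm_le (K i) (K j).
Proof.
move=> ascK i j /subnK <-; elim: (j - i)%N => [|n IH]; first exact: fm_le_refl.
by rewrite addSn; apply: fm_le_trans IH (ascK _).
Qed.

Lemma lub_unique (K : nat -> M) (a b : M) : is_lub K a -> is_lub K b -> a = b.
Proof. by move=> [ua la] [ub lb]; apply: fm_le_antisym; [apply: la | apply: lb]. Qed.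

Lemma sup_lub (K : nat -> M) : ascending K -> is_lub K (sup K).
Proof. by move=> ascK; apply: epsilon_spec; case: HM => _ lubs _; apply: lubs. Qed.

Lemma lub_mono (K L : nat -> M) (k l : M) :
  (forall i, fm_le (K i) (L i)) -> is_lub K k -> is_lub L l -> fm_le k l.
Proof. by move=> KL [_ lk] [ul _]; apply: lk => i; apply: fm_le_trans (KL i) (ul i). Qed.

Lemma lub_const (c : M) : is_lub (fun _ => c) c.
Proof. by split=> [i|u hu]; [apply: fm_le_refl | apply: hu 0%N]. Qed.

Lemma lub_shift (K : nat -> M) (l : M) :
  ascending K -> is_lub K l -> is_lub (fun n => K n.+1) l.
Proof.
move=> ascK [u lu]; split=> [i|v hv]; first exact: u.
by apply: lu => -[|i]; [apply: fm_le_trans (ascK 0%N) (hv 0%N) | apply: hv].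
Qed.

(* Addition is continuous in both arguments jointly (from continuity in one). *)
Lemma lub_add (K L : nat -> M) (k l : M) : ascending K -> ascending L ->
  is_lub K k -> is_lub L l -> is_lub (fun i => K i + L i) (k + l).
Proof.
move=> ascK ascL [uk lk] [ul ll]; split=> [i|u hu]; first exact: fm_le_add.
case: HM => _ _ addC.
have Kl_le j : fm_le (K j + l) u.
  have [_ least] := addC (K j) L l ascL (conj ul ll); apply: least => i.
  apply: fm_le_trans (hu (maxn i j)); apply: fm_le_add; apply: ascending_mono => //.
    exact: leq_maxr.
  exact: leq_maxl.
have [_ least] := addC l K k ascK (conj uk lk).
by rewrite addrC; apply: least => j; rewrite addrC.
Qed.

Lemma lub_sum (I : eqType) (s : seq I) (F : I -> nat -> M) (L : I -> M) :
  (forall y, y \in s -> ascending (F y) /\ is_lub (F y) (L y)) ->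
  ascending (fun n => \sum_(y <- s) F y n) /\
  is_lub (fun n => \sum_(y <- s) F y n) (\sum_(y <- s) L y).
Proof.
elim: s => [|a s IH] FL.
  have -> : (fun n => \sum_(y <- [::]) F y n) = (fun _ => 0).
    by apply: functional_extensionality => n; rewrite big_nil.
  by rewrite big_nil; split; [move=> i; apply: fm_le_refl | apply: lub_const].
have [ascA lubA] := FL a (mem_head _ _).
have [ascS lubS] := IH (fun y ys => FL y (mem_behead (s := a :: s) ys)).
have -> : (fun n => \sum_(y <- a :: s) F y n) = (fun n => F a n + \sum_(y <- s) F y n).
  by apply: functional_extensionality => n; rewrite big_cons.
by rewrite big_cons; split; [move=> i; apply: fm_le_add | apply: lub_add].
Qed.

(* Chain-continuous functions are monotone (apply them to the chain a, b, b, ...). *)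
Lemma continuous_mono (f : M -> M) (a b : M) :
  chain_continuous f -> fm_le a b -> fm_le (f a) (f b).
Proof.
move=> contf ab; pose K i : M := if i == 0%N then a else b.
have ascK : ascending K by case=> [|i]; rewrite /K //=; apply: fm_le_refl.
have lubK : is_lub K b.
  by split=> [[|i]|u hu]; [exact: ab | exact: fm_le_refl | exact: hu 1%N].
by have [ub _] := contf K b ascK lubK; apply: (ub 0%N).
Qed.

End FlowMonoidOrder.

Section Inflow.
Variable M : nmodType.
Hypothesis HM : flow_monoid M.

Lemma partial_sums_ascending (P : pred nat) (f : nat -> M) :
  ascending (fun n => \sum_(y < n | P y) f y).
Proof. by move=> n; rewrite /= big_mkcond [X in fm_le _ X]big_mkcond big_ord_recr; eexists. Qed.

Lemma inflow_lub (h : flow_graph M) (x : nat) :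
  is_lub (fun n => \sum_(y < n | (y : nat) \notin fg_X h) fg_in h y x) (inflow h x).
Proof.
exact: (sup_lub HM (partial_sums_ascending (fun y : nat => y \notin fg_X h)
                                           (fun y => fg_in h y x))).
Qed.

Lemma inflow_mono (h h' : flow_graph M) (x : nat) : fg_X h = fg_X h' ->
  (forall z, z \notin fg_X h -> fm_le (fg_in h z x) (fg_in h' z x)) ->
  fm_le (inflow h x) (inflow h' x).
Proof.
move=> eqX le_in; apply: lub_mono (inflow_lub h x) (inflow_lub h' x) => n.
by rewrite -eqX; apply: fm_le_sum => y _; apply: le_in.
Qed.

Lemma sum_fsetD_split (S W : {fset nat}) (F : nat -> M) : S `<=` W ->
  \sum_(y <- W) F y = \sum_(y <- W `\` S) F y + \sum_(y <- S) F y.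
Proof.
move=> /fsubsetP SW; rewrite -big_cat; apply: perm_big; apply: uniq_perm.
- exact: fset_uniq.
- by rewrite cat_uniq !fset_uniq /= andbT; apply/hasPn => y ys; rewrite !inE ys.
move=> y; rewrite mem_cat !inE; case yS: (y \in S); first by rewrite orbT SW.
by rewrite orbF.
Qed.

Lemma partial_sum_fset (D : {fset nat}) (c : nat -> M) n :
  (forall y, y \in D -> (y < n)%N) ->
  \sum_(y < n | (y : nat) \in D) c y = \sum_(y <- D) c y.
Proof.
move=> Dn; rewrite -(big_mkord (fun y => y \in D)) -big_filter.
apply: perm_big; apply: uniq_perm; [exact: filter_uniq (iota_uniq _ _) | exact: fset_uniq |].
move=> y; rewrite mem_filter mem_iota add0n subn0.
by apply/andP/idP => [[]//|yD]; split => //; apply: Dn.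
Qed.

Lemma inflow_shrink (X0 X1 : {fset nat}) (E0 E1 : nat -> nat -> M -> M)
    (in0 c : nat -> nat -> M) x : X1 `<=` X0 ->
  inflow (FlowGraph X1 E1 (fun z y => if z \in X0 then c z y else in0 z y)) x =
  inflow (FlowGraph X0 E0 in0) x + \sum_(z <- X0 `\` X1) c z x.
Proof.
move=> /fsubsetP X10; set D := X0 `\` X1.
pose A n := \sum_(y < n | (y : nat) \notin X0) in0 y x.
pose B n := \sum_(y < n | (y : nat) \in D) c y x.
have splitAB : (fun n => \sum_(y < n | (y : nat) \notin X1)
                  (if (y : nat) \in X0 then c y x else in0 y x)) = (fun n => A n + B n).
  apply: functional_extensionality => n.
  rewrite (bigID (fun y : 'I_n => (y : nat) \in X0)) /= addrC; congr (_ + _).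
    apply: eq_big => y; last by move=> /andP[_ /negbTE ->].
    by apply/andP/idP => [[]//|yX0]; split => //; apply: contra yX0; apply: X10.
  by apply: eq_big => y; [rewrite /D in_fsetD andbC | move=> /andP[_ ->]].
have ascB : ascending B := partial_sums_ascending _ (fun y => c y x).
pose N := (\max_(y <- D) y).+1.
have DN y : y \in D -> (y < N)%N by move=> yD; rewrite ltnS; exact: leq_bigmax_seq.
have BN n : (N <= n)%N -> B n = \sum_(z <- D) c z x.
  by move=> Nn; apply: partial_sum_fset => y /DN yN; apply: leq_trans yN Nn.
have lubB : is_lub B (\sum_(z <- D) c z x).
  split=> [i|u hu]; last by rewrite -(BN N).
  apply: fm_le_trans (ascending_mono ascB (leq_maxl i N)) _.
  by rewrite BN ?leq_maxr //; apply: fm_le_refl.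
have ascA : ascending A :=
  partial_sums_ascending (fun y : nat => y \notin X0) (fun y => in0 y x).
have := lub_add HM ascA ascB (inflow_lub (FlowGraph X0 E0 in0) x) lubB.
rewrite -/A -/B -splitAB => lubAB.
have lubX1 := inflow_lub (FlowGraph X1 E1 (fun z y => if z \in X0 then c z y else in0 z y)) x.
exact (lub_unique HM lubX1 lubAB).
Qed.

End Inflow.

Section LeastFlow.
Variable M : nmodType.
Hypothesis HM : flow_monoid M.

Definition flow_step (h : flow_graph M) (f : nat -> M) (x : nat) : M :=
  inflow h x + \sum_(y <- fg_X h) fg_E h y x (f y).

Lemma flow_step_mono (h : flow_graph M) (f g : nat -> M) : is_flow_graph h ->
  (forall y, y \in fg_X h -> fm_le (f y) (g y)) ->
  forall x, fm_le (flow_step h f x) (flow_step h g x).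
Proof.
move=> hh fg x; apply: fm_le_add; first exact: fm_le_refl.
by apply: fm_le_sum => y yX _; apply: continuous_mono (hh _ _ yX) (fg _ yX).
Qed.

Definition kleene (h : flow_graph M) (n : nat) : nat -> M :=
  iter n (flow_step h) (fun _ => 0).

Definition kleene_lub (h : flow_graph M) (x : nat) : M := sup (fun n => kleene h n x).

Lemma kleene_ascending (h : flow_graph M) : is_flow_graph h ->
  forall x, ascending (fun n => kleene h n x).
Proof.
move=> hh x n; elim: n x => [|n IH] x; first exact: fm_le0.
by apply: flow_step_mono => // y _; apply: IH.
Qed.

(* By continuity of edges and addition, the lub of the iteration is a fixpoint. *)
Lemma kleene_lub_fixed (h : flow_graph M) : is_flow_graph h ->
  forall x, flow_step h (kleene_lub h) x = kleene_lub h x.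
Proof.
move=> hh x; have asc := kleene_ascending hh.
have lub y : is_lub (fun n => kleene h n y) (kleene_lub h y) := sup_lub HM (asc y).
apply: (lub_unique HM (K := fun n => kleene h n.+1 x)); last exact: lub_shift (asc x) (lub x).
have [ascE lubE] := @lub_sum M HM _ (fg_X h) (fun y n => fg_E h y x (kleene h n y))
  (fun y => fg_E h y x (kleene_lub h y))
  (fun y yX => conj (fun n => continuous_mono (hh _ _ yX) (asc y n))
                    (hh _ _ yX _ _ (asc y) (lub y))).
by case: HM => _ _ addC; apply: addC ascE lubE.
Qed.

Lemma kleene_lub_least (h : flow_graph M) (g : nat -> M) : is_flow_graph h ->
  (forall x, x \in fg_X h -> fm_le (flow_step h g x) (g x)) ->
  forall x, x \in fg_X h -> fm_le (kleene_lub h x) (g x).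
Proof.
move=> hh pre x xX; have [_ least] := sup_lub HM (kleene_ascending hh x).
apply: least => n; elim: n x xX => [|n IH] x xX; first exact: fm_le0.
by apply: fm_le_trans (pre x xX); apply: flow_step_mono.
Qed.

Lemma kleene_lub_least_flow (h : flow_graph M) : is_flow_graph h ->
  is_least_flow h (kleene_lub h).
Proof.
move=> hh; split=> [x _|g sol]; first by rewrite -[LHS](kleene_lub_fixed hh).
by apply: kleene_lub_least => // x xX; apply: fm_le_eq; rewrite [RHS](sol x xX).
Qed.

Lemma flow_solution (h : flow_graph M) : is_flow_graph h -> is_flow_solution h (flow h).
Proof.
move=> hh; have klf := kleene_lub_least_flow hh.
by have [] : is_least_flow h (flow h) := epsilon_spec _ _ (ex_intro _ _ klf).
Qed.

Lemma flow_least (h : flow_graph M) (g : nat -> M) : is_flow_graph h ->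
  (forall x, x \in fg_X h -> fm_le (flow_step h g x) (g x)) ->
  forall x, x \in fg_X h -> fm_le (flow h x) (g x).
Proof.
move=> hh pre x xX; apply: fm_le_trans (kleene_lub_least hh pre xX).
have klf := kleene_lub_least_flow hh.
have [_ least] : is_least_flow h (flow h) := epsilon_spec _ _ (ex_intro _ _ klf).
exact: least _ klf.1 x xX.
Qed.

Lemma graph_eq_flow (h h' : flow_graph M) : graph_eq h h' -> flow h = flow h'.
Proof.
move=> [eqX eqE eqin].
have eq_sol f : is_flow_solution h f <-> is_flow_solution h' f.
  have step x : x \in fg_X h -> flow_step h f x = flow_step h' f x.
    move=> xX; rewrite /flow_step /inflow -eqX; congr (sup _ + _).
      by apply: functional_extensionality => n; apply: eq_bigr => y yX'; apply: eqin.
    by apply: eq_big_seq => y yX; apply: eqE.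
  split=> sol x xX; first rewrite -eqX in xX.
    by rewrite -[_ + _]/(flow_step h' f x) -step //; apply: sol.
  by rewrite -[_ + _]/(flow_step h f x) step //; apply: sol; rewrite -eqX.
rewrite /flow; congr epsilon; apply: functional_extensionality => f.
apply: propositional_extensionality; split=> -[sol least]; split.
- exact/eq_sol.
- by move=> g /eq_sol sg x; rewrite -eqX; apply: least.
- exact/eq_sol.
- by move=> g /eq_sol sg x; rewrite eqX; apply: least.
Qed.

End LeastFlow.

Section Restriction.
Variable M : nmodType.
Hypothesis HM : flow_monoid M.

(* The inflow of a restriction of h: outside nodes of h keep their inflow,
   removed nodes of h send their flow along their edges.  Thus
   restrict h Y = FlowGraph (fg_X h `&` Y) (fg_E h) (restrict_inflow h). *)
Definition restrict_inflow (h : flow_graph M) (z y : nat) : M :=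
  if z \in fg_X h then fg_E h z y (flow h z) else fg_in h z y.

Lemma inflow_restrict (h : flow_graph M) (S : {fset nat}) (E : nat -> nat -> M -> M) x :
  S `<=` fg_X h ->
  inflow (FlowGraph S E (restrict_inflow h)) x =
  inflow h x + \sum_(z <- fg_X h `\` S) fg_E h z x (flow h z).
Proof. by case: h => X E0 in0 SX; apply: inflow_shrink. Qed.

(* Splicing: inside a common node set W, let Gj differ from Gi only by the
   edges leaving S, and let Kj be Gj restricted to S, fed by Gi.  If what Kj
   sends from S into W \ S is bounded by what Gi sends, then the flow of Kj on
   S glued to the flow of Gi outside S is a prefixpoint for Gj, hence bounds
   its flow. *)
Lemma splice_bound (W S : {fset nat}) (Ei Ej : nat -> nat -> M -> M)
    (inp : nat -> nat -> M) :
  (forall x y, x \in W -> chain_continuous (Ei x y)) ->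
  (forall x y, x \in W -> chain_continuous (Ej x y)) ->
  S `<=` W ->
  (forall y z m, y \in W -> y \notin S -> Ei y z m = Ej y z m) ->
  (forall y z, y \in S -> z \in W -> z \notin S ->
     fm_le (Ej y z (flow (FlowGraph S Ej (restrict_inflow (FlowGraph W Ei inp))) y))
           (Ei y z (flow (FlowGraph W Ei inp) y))) ->
  forall z, z \in W ->
    fm_le (flow (FlowGraph W Ej inp) z)
      (if z \in S then flow (FlowGraph S Ej (restrict_inflow (FlowGraph W Ei inp))) z
       else flow (FlowGraph W Ei inp) z).
Proof.
move=> contEi contEj SW eqE out_le.
set Gi := FlowGraph W Ei inp; set Kj := FlowGraph S Ej _.
have solGi := flow_solution HM (contEi : is_flow_graph Gi).
have solKj : is_flow_solution Kj (flow Kj).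
  by apply: flow_solution => // x y xS; apply: contEj; apply: (fsubsetP SW).
refine (@flow_least _ HM (FlowGraph W Ej inp)
  (fun z => if z \in S then flow Kj z else flow Gi z) contEj _) => x xW.
have sum_splice : \sum_(y <- W) Ej y x (if y \in S then flow Kj y else flow Gi y) =
    \sum_(y <- W `\` S) Ei y x (flow Gi y) + \sum_(y <- S) Ej y x (flow Kj y).
  rewrite (sum_fsetD_split _ SW); congr (_ + _); apply: eq_big_seq => y.
    by rewrite in_fsetD => /andP[/negbTE yS yW]; rewrite yS eqE ?yS.
  by move=> ->.
rewrite /flow_step sum_splice addrA; case: ifP => xS.
  by rewrite -(@inflow_restrict Gi S Ej x SW) -(solKj x xS); apply: fm_le_refl.
rewrite [X in fm_le _ X](solGi x xW) (sum_fsetD_split _ SW) addrA.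
apply: fm_le_add; first exact: fm_le_refl.
by apply: fm_le_sum => y yS _; apply: out_le => //; rewrite xS.
Qed.

Lemma restrict_flow (h : flow_graph M) (S : {fset nat}) : is_flow_graph h ->
  S `<=` fg_X h ->
  forall x, x \in S -> flow (FlowGraph S (fg_E h) (restrict_inflow h)) x = flow h x.
Proof.
case: h => W E inp hh SW; set R := FlowGraph S E _.
have hR : is_flow_graph R by move=> x y xS; apply: hh; apply: (fsubsetP SW).
have solh := flow_solution HM hh.
have R_le : forall x, x \in S -> fm_le (flow R x) (flow (FlowGraph W E inp) x).
  refine (@flow_least _ HM R _ hR _) => x xS; apply: fm_le_eq.
  rewrite /flow_step (@inflow_restrict (FlowGraph W E inp) S E x SW) -addrA -sum_fsetD_split //.
  by rewrite [RHS]solh //; apply: (fsubsetP SW).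
move=> x xS; apply: (fm_le_antisym HM (R_le x xS)).
have := splice_bound hh hh SW (fun _ _ _ _ _ => erefl)
  (fun y z yS _ _ => continuous_mono (hh _ _ (fsubsetP SW y yS)) (R_le y yS))
  (fsubsetP SW x xS).
by rewrite xS.
Qed.

Lemma restrict_flow_eq (h : flow_graph M) (Y : {fset nat}) x : is_flow_graph h ->
  x \in fg_X h `&` Y -> flow (restrict h Y) x = flow h x.
Proof. by move=> hh xXY; exact (restrict_flow hh (fsubsetIl _ Y) xXY). Qed.

Lemma flow_mono (X : {fset nat}) (E : nat -> nat -> M -> M) (inp inp' : nat -> nat -> M) :
  is_flow_graph (FlowGraph X E inp) ->
  (forall z y, z \notin X -> y \in X -> fm_le (inp z y) (inp' z y)) ->
  forall x, x \in X -> fm_le (flow (FlowGraph X E inp) x) (flow (FlowGraph X E inp') x).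
Proof.
move=> hh le_in; refine (@flow_least _ HM _ _ hh _) => x xX.
rewrite [X in fm_le _ X](flow_solution HM (hh : is_flow_graph (FlowGraph X E inp'))) //.
apply: fm_le_add; last exact: fm_le_refl.
by apply: inflow_mono => // z zX; apply: le_in.
Qed.

Lemma restrict_flow_dominated (h : flow_graph M) (Y : {fset nat}) (inp : nat -> nat -> M) :
  is_flow_graph h ->
  (forall z y, z \notin fg_X h `&` Y -> y \in fg_X h `&` Y ->
     fm_le (inp z y) (restrict_inflow h z y)) ->
  forall z, z \in fg_X h `&` Y ->
    fm_le (flow (FlowGraph (fg_X h `&` Y) (fg_E h) inp) z) (flow h z).
Proof.
move=> hh le_in z zXY; rewrite -(restrict_flow_eq hh zXY).
apply: flow_mono => // x y; rewrite in_fsetI => /andP[xX _]; exact: hh.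
Qed.

Lemma restrict_inflow_dominated (h : flow_graph M) (Y S : {fset nat})
    (inp : nat -> nat -> M) :
  is_flow_graph h -> S `<=` fg_X h `&` Y ->
  (forall z y, z \notin fg_X h `&` Y -> y \in fg_X h `&` Y ->
     fm_le (inp z y) (restrict_inflow h z y)) ->
  forall z y, z \notin S -> y \in S ->
    fm_le (restrict_inflow (FlowGraph (fg_X h `&` Y) (fg_E h) inp) z y)
          (restrict_inflow h z y).
Proof.
move=> hh SXY le_in z y zS yS; rewrite /restrict_inflow /=.
case: ifP => zXY; last by apply: le_in; [rewrite zXY | apply: (fsubsetP SXY)].
have zX : z \in fg_X h by move: zXY; rewrite in_fsetI => /andP[].
rewrite zX; apply: continuous_mono (hh _ _ zX) _.
exact: restrict_flow_dominated.
Qed.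

End Restriction.

Section Replacement.
Variable M : nmodType.
Hypothesis HM : flow_monoid M.

Variables (W S : {fset nat}) (inp : nat -> nat -> M).
Hypothesis SW : S `<=` W.

(* If replacing the edges Ei leaving S by Ej does not change the outflow of S
   when fed by the Ei-graph, then outside S the Ej-graph has no more flow than
   the Ei-graph (splicing, with restrict_flow for the Ei side).  Stated for an
   arbitrary ordered pair of edge functions so that it serves both ways. *)
Lemma flow_le_outside (Ei Ej : nat -> nat -> M -> M) :
  (forall x y, x \in W -> chain_continuous (Ei x y)) ->
  (forall x y, x \in W -> chain_continuous (Ej x y)) ->
  (forall y z m, y \in W -> y \notin S -> Ei y z m = Ej y z m) ->
  (forall y z, y \in S -> z \notin S ->
     outflow (FlowGraph S Ej (restrict_inflow (FlowGraph W Ei inp))) y z =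
     outflow (FlowGraph S Ei (restrict_inflow (FlowGraph W Ei inp))) y z) ->
  forall z, z \in W -> z \notin S ->
    fm_le (flow (FlowGraph W Ej inp) z) (flow (FlowGraph W Ei inp) z).
Proof.
move=> contEi contEj eqEij out_eqij z zW zS.
have hGi : is_flow_graph (FlowGraph W Ei inp) := contEi.
have := splice_bound HM contEi contEj SW eqEij _ zW; rewrite (negbTE zS); apply.
move=> y x yS _ xS; apply: fm_le_eq; have := out_eqij y x yS xS.
by rewrite /outflow /= => ->; rewrite (restrict_flow HM hGi SW yS).
Qed.

Variables E1 E2 : nat -> nat -> M -> M.
Hypothesis contE1 : forall x y, x \in W -> chain_continuous (E1 x y).
Hypothesis contE2 : forall x y, x \in W -> chain_continuous (E2 x y).
Hypothesis eqE : forall y z m, y \in W -> y \notin S -> E1 y z m = E2 y z m.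

Local Notation G1 := (FlowGraph W E1 inp).
Local Notation G2 := (FlowGraph W E2 inp).

Hypothesis out_eq1 : forall y z, y \in S -> z \notin S ->
  outflow (FlowGraph S E1 (restrict_inflow G1)) y z =
  outflow (FlowGraph S E2 (restrict_inflow G1)) y z.
Hypothesis out_eq2 : forall y z, y \in S -> z \notin S ->
  outflow (FlowGraph S E1 (restrict_inflow G2)) y z =
  outflow (FlowGraph S E2 (restrict_inflow G2)) y z.

Lemma flow_eq_outside z : z \in W -> z \notin S -> flow G1 z = flow G2 z.
Proof.
move=> zW zS; apply: (fm_le_antisym HM).
- by apply: (flow_le_outside contE2 contE1 _ out_eq2) => // y x m yW yS; rewrite eqE.
- by apply: (flow_le_outside contE1 contE2 eqE) => // y x yS xS; rewrite out_eq1.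
Qed.

Lemma outflow_replace x y : x \in W -> y \notin W -> outflow G1 x y = outflow G2 x y.
Proof.
move=> xW yW; have yS : y \notin S by apply: contra yW; apply: (fsubsetP SW).
case xS: (x \in S); last by rewrite /outflow /= eqE ?xS // flow_eq_outside ?xS.
rewrite /outflow /= -(restrict_flow HM (contE1 : is_flow_graph G1) SW xS).
rewrite -(restrict_flow HM (contE2 : is_flow_graph G2) SW xS).
have := out_eq1 xS yS; rewrite /outflow /= => ->; congr (E2 x y (_ x)).
apply: graph_eq_flow; split=> // z u zS _.
rewrite /restrict_inflow /=; case: ifP => // zW.
by rewrite eqE ?flow_eq_outside.
Qed.

End Replacement.

Section Footprint.
Variable M : nmodType.
Hypothesis HM : flow_monoid M.

Variables (X : {fset nat}) (E1 E2 : nat -> nat -> M -> M) (in1 in2 : nat -> nat -> M).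
Local Notation h1 := (FlowGraph X E1 in1).
Local Notation h2 := (FlowGraph X E2 in2).
Hypothesis hh1 : is_flow_graph h1.
Hypothesis hh2 : is_flow_graph h2.
Hypothesis same_in12 : same_in h1 h2.
Variable Z : {fset nat}.
Hypothesis FPZ : FP h1 h2 Z.

Lemma in_outside_footprint x : x \in X -> x \notin Z -> x \in X `&` (X `\` Z).
Proof. by move=> xX xZ; rewrite in_fsetI in_fsetD xX xZ. Qed.

Lemma edges_agree_off x y m : x \in X -> x \notin Z -> E1 x y m = E2 x y m.
Proof.
by case: FPZ => _ _ [_ eqE _] xX xZ; apply: eqE; apply: in_outside_footprint.
Qed.

Lemma flows_agree_off x : x \in X -> x \notin Z -> flow h1 x = flow h2 x.
Proof.
case: FPZ => _ _ /graph_eq_flow eq_flow xX xZ.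
have xXZ := in_outside_footprint xX xZ.
by rewrite -(restrict_flow_eq HM hh1 xXZ) -(restrict_flow_eq HM hh2 xXZ) eq_flow.
Qed.

Lemma inflows_agree_from_off z y : z \notin Z -> y \in X ->
  restrict_inflow h1 z y = restrict_inflow h2 z y.
Proof.
move=> zZ yX; rewrite /restrict_inflow /=; case: ifP => zX.
  by rewrite edges_agree_off ?flows_agree_off.
by apply: same_in12; rewrite ?zX.
Qed.

Lemma inflows_agree_into_off z y : y \in X -> y \notin Z ->
  restrict_inflow h1 z y = restrict_inflow h2 z y.
Proof.
move=> yX yZ; have [zZ|zZ] := boolP (z \in Z); last exact: inflows_agree_from_off.
case: FPZ => _ _ [_ _ eq_in]; apply: eq_in; last exact: in_outside_footprint.
by rewrite in_fsetI in_fsetD zZ andbF.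
Qed.

Variable Y : {fset nat}.
Hypothesis ZY : Z `<=` Y.

Lemma not_in_footprint z : z \notin X `&` Y -> z \notin Z.
Proof.
case: FPZ => /fsubsetP ZX _ _; rewrite in_fsetI negb_and => /orP[zX|zY].
  by apply: contra zX; apply: ZX.
by apply: contra zY; apply: (fsubsetP ZY).
Qed.

Lemma restrict_same_in : same_in (restrict h1 Y) (restrict h2 Y).
Proof.
move=> z y /= zXY yXY; apply: inflows_agree_from_off; first exact: not_in_footprint.
by move: yXY; rewrite in_fsetI => /andP[].
Qed.

Lemma restrict_compl_graph_eq :
  graph_eq (restrict h1 (X `\` Y)) (restrict h2 (X `\` Y)).
Proof.
have out_Z x : x \in X `&` (X `\` Y) -> x \in X /\ x \notin Z.
  rewrite !in_fsetI in_fsetD => /and3P[xX xY _]; split=> //.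
  by apply: contra xY; apply: (fsubsetP ZY).
split=> // [x y m /out_Z [xX xZ]|z y _ /out_Z [yX yZ]].
  exact: edges_agree_off.
exact: inflows_agree_into_off.
Qed.

(* The transfer functions of h1|_Y and h2|_Y agree: run both on X /\ Y with the
   given inflow and replace the edges leaving X /\ Z, using that Z is a
   footprint. *)
Lemma restrict_tf_eq :
  tf_eq_on (X `&` Y) (restrict_inflow h1) (restrict h1 Y) (restrict h2 Y).
Proof.
move=> inp le_in1 x y xW yW; rewrite /tf /=.
case: FPZ => _ [_ same_inZ tfZ] _.
have SW : X `&` Z `<=` X `&` Y by apply: fsetIS.
have le_in2 z u : z \notin X `&` Y -> u \in X `&` Y ->
    fm_le (inp z u) (restrict_inflow h2 z u).
  move=> zW uW; rewrite -inflows_agree_from_off; first exact: le_in1.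
    exact: not_in_footprint.
  by move: uW; rewrite in_fsetI => /andP[].
have contW (E : nat -> nat -> M -> M) : is_flow_graph (FlowGraph X E inp) ->
    forall a b, a \in X `&` Y -> chain_continuous (E a b).
  by move=> contE a b; rewrite in_fsetI => /andP[aX _]; apply: contE.
apply: (outflow_replace HM SW (contW _ hh1) (contW _ hh2)) => //.
- move=> a b m; rewrite !in_fsetI => /andP[aX _]; rewrite aX => aZ.
  exact: edges_agree_off.
- move=> a b aS bS; apply: tfZ => // z u zS uS.
  exact: (restrict_inflow_dominated HM hh1 SW le_in1).
- move=> a b aS bS; apply: tfZ => // z u zS uS; rewrite same_inZ //.
  exact: (restrict_inflow_dominated HM hh2 SW le_in2).
Qed.

End Footprint.

Theorem lemma3 (M : nmodType) (HM : flow_monoid M)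
    (h1 h2 : flow_graph M) :
  is_flow_graph h1 -> is_flow_graph h2 ->
  fg_X h1 = fg_X h2 -> same_in h1 h2 ->
  forall Z Y : {fset nat},
    FP h1 h2 Z -> Z `<=` Y -> Y `<=` fg_X h1 -> FP h1 h2 Y.
Proof.
case: h1 h2 => [X E1 in1] [X2 E2 in2] /= hh1 hh2 eqX; subst X2.
move=> same_in12 Z Y FPZ ZY YX.
split=> //; last exact (restrict_compl_graph_eq HM hh1 hh2 same_in12 FPZ ZY).
split=> //; first exact (restrict_same_in HM hh1 hh2 same_in12 FPZ ZY).
exact (restrict_tf_eq HM hh1 hh2 same_in12 FPZ ZY).
Qed.
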